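(* Let $(S,+)$ be an uncountable semigroup with no idempotent element. Then the following are equivalent: (a) every uncountable IP set $A\subseteq S$ can be partitioned into uncountably many pairwise disjoint sets each of which is an IP set; (b) every uncountable subset of $S$ is an IP set.
   Context: $e$ is idempotent if $e+e=e$. For a sequence $\langle x_n\rangle_{n=1}^\infty$ in $S$, $\mathrm{FS}(\langle x_n\rangle_{n=1}^\infty)$ is the set of all sums $\sum_{n\in H}x_n$ (in increasing order of indices) with $H$ a nonempty finite subset of $\mathbb{N}$. $A\subseteq S$ is an IP set if $\mathrm{FS}(\langle x_n\rangle_{n=1}^\infty)\subseteq A$ for some sequence $\langle x_n\rangle_{n=1}^\infty$ in $S$. *)

From mathcomp Require Import all_boot.
From mathcomp Require Import boolp classical_sets cardinality.
Set Implicit Arguments. Unset Strict Implicit. Unset Printing Implicit Defensive.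
Local Open Scope classical_set_scope.

(* A nonempty finite H ⊆ ℕ is represented
   by its increasing enumeration i0 :: s with path ltn i0 s. *)
Definition fsum (S : Type) (op : S -> S -> S) (x : nat -> S) (i0 : nat) (s : seq nat) : S :=
  foldl (fun acc i => op acc (x i)) (x i0) s.

Definition FS (S : Type) (op : S -> S -> S) (x : nat -> S) : set S :=
  [set y | exists i0 s, path ltn i0 s /\ y = fsum op x i0 s].

Definition IPset (S : Type) (op : S -> S -> S) (A : set S) : Prop :=
  exists x : nat -> S, FS op x `<=` A.

Definition is_partition_of (S : Type) (P : set (set S)) (A : set S) : Prop :=
  (forall B C, P B -> P C -> B <> C -> B `&` C = set0) /\
  \bigcup_(B in P) B = A.

From mathcomp Require Import all_boot.
From mathcomp Require Import boolp classical_sets cardinality.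
Local Open Scope classical_set_scope.

(* Both directions are counting arguments using only that every FS set is
   countable and nonempty.  Only countably many
   blocks meet the countable set FS(a, a, ...), so some IP block lies in A.
   (b) -> (a): by Zorn, take a maximal family of pairwise disjoint FS sets
   inside A.  Were it countable, the rest of A would be uncountable, hence
   would contain one more FS set by (b).  So the family is uncountable, and
   adding the rest of A to one of its members yields the partition. *)

Definition pairwise_disjoint {T : Type} (P : set (set T)) : Prop :=
  forall B C, P B -> P C -> B <> C -> B `&` C = set0.

Lemma subset_countable {T} {A B : set T} :
  A `<=` B -> countable B -> countable A.
Proof. by move=> AB; apply/sub_countable/subset_card_le. Qed.

Lemma countable_image {T U} (f : T -> U) {A : set T} :
  countable A -> countable (f @` A).
Proof. exact/sub_countable/card_image_le. Qed.

Lemma countable_setU {T} {A B : set T} :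
  countable A -> countable B -> countable (A `|` B).
Proof.
move=> cA cB.
have : countable (\bigcup_(b in [set: bool]) if b then A else B).
  by apply: bigcup_countable => // -[].
by apply: subset_countable => z [Az|Bz]; [exists true | exists false].
Qed.

Lemma uncountable_setD {T} {A B : set T} :
  ~ countable A -> countable B -> ~ countable (A `\` B).
Proof.
move=> Aunc cB cAB; apply: Aunc.
apply: (subset_countable _ (countable_setU cAB cB)) => z Az.
by have [Bz|nBz] := pselect (B z); [right|left].
Qed.

Lemma uncountable_set0 {T} {A : set T} : ~ countable A -> A !=set0.
Proof.
move=> Aunc; apply: contrapT => /set0P/negP/negbNE/eqP A0.
by apply: Aunc; rewrite A0; apply: countable0.
Qed.

(* Each point of C lies in at most one block. *)
Lemma countable_blocks_meeting {T} {P : set (set T)} {C : set T} :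
  pairwise_disjoint P -> countable C ->
  countable [set B | P B /\ B `&` C !=set0].
Proof.
move=> Pdisj cC; pose block c := xget set0 [set B | P B /\ B c].
apply: (subset_countable (B := block @` C)); last exact: countable_image.
move=> B [PB [c [Bc Cc]]]; exists c => //.
have [Pbc bcc] : [set B | P B /\ B c] (block c) by apply: xgetPex; exists B.
apply: contrapT => neq.
by have /seteqP[/(_ c) + _] := Pdisj _ _ Pbc PB neq; apply.
Qed.

Lemma uncountable_disjoint_avoid {T} {P : set (set T)} {C : set T} :
  pairwise_disjoint P -> ~ countable P -> countable C ->
  exists2 B, P B & B `&` C = set0.
Proof.
move=> Pdisj Punc cC; apply: contrapT => noB; apply: Punc.
apply: subset_countable (countable_blocks_meeting Pdisj cC) => B PB.
split=> //; apply/set0P/eqP => BC0; exact: noB (ex_intro2 _ _ B PB BC0).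
Qed.

Lemma maximal_disjoint_family {T} (Q : set T -> Prop) :
  exists M : set (set T), [/\ M `<=` Q, pairwise_disjoint M &
    forall B, Q B -> (forall C, M C -> C <> B -> C `&` B = set0) -> M B].
Proof.
pose good F := F `<=` Q /\ pairwise_disjoint F.
have [M [[MQ Mdisj] Mmax]] : exists M, good M /\ forall N, M `<` N -> ~ good N.
  apply: Zorn_bigcup => Fs Fsg Ftot; split.
  - by move=> B [F FsF FB]; exact: (Fsg F FsF).1.
  - move=> B C [F FsF FB] [G FsG GC].
    have [FG|GF] := Ftot F G FsF FsG.
    + exact: (Fsg G FsG).2 B C (FG B FB) GC.
    + exact: (Fsg F FsF).2 B C FB (GF C GC).
exists M; split=> // B QB Bdisj; apply: contrapT => nMB.
apply: (Mmax (M `|` [set B])).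
  split; first by move=> C MC; left.
  by move=> /(_ B) MB; apply/nMB/MB; right.
split; first by move=> C [/MQ //|->].
move=> C D [MC|->] [MD|->] neq //; first exact: Mdisj.
  exact: Bdisj.
by rewrite setIC; apply: Bdisj => // DB; apply: neq.
Qed.

Lemma partition_absorb_rest {T} (M : set (set T)) (A B0 : set T) :
  pairwise_disjoint M -> (forall B, M B -> B `<=` A) -> M B0 ->
  is_partition_of
    ([set B | M B /\ B <> B0] `|` [set B0 `|` (A `\` \bigcup_(B in M) B)]) A.
Proof.
move=> Mdisj MA MB0; split.
- move=> B C [[MB nB]|->] [[MC nC]|->] neq //; first exact: Mdisj.
  + rewrite -subset0 => z [Bz [B0z|[_ nUz]]].
    * by rewrite -(Mdisj _ _ MB MB0 nB).
    * by apply: nUz; exists B.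
  + rewrite -subset0 => z [[B0z|[_ nUz]] Cz].
    * by rewrite -(Mdisj _ _ MC MB0 nC).
    * by apply: nUz; exists C.
- apply/seteqP; split.
  + move=> z [B [[MB _]|->] Bz]; first exact: MA MB _ Bz.
    by case: Bz => [/(MA _ MB0)|[]].
  + move=> z Az; have [[B MB Bz]|nUz] := pselect ((\bigcup_(B in M) B) z).
    * have [eqB|neq] := pselect (B = B0); last by exists B; [left|].
      by exists (B0 `|` (A `\` \bigcup_(B in M) B)); [right|left; rewrite -eqB].
    * by exists (B0 `|` (A `\` \bigcup_(B in M) B)); [right|right].
Qed.

Section IPsets.
Variables (S : Type) (op : S -> S -> S).

Lemma IPsetS {A B : set S} : A `<=` B -> IPset op A -> IPset op B.
Proof. by move=> AB [x FSA]; exists x => z /FSA /AB. Qed.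

Lemma countable_FS (x : nat -> S) : countable (FS op x).
Proof.
apply: (subset_countable _ (countable_image (fun p => fsum op x p.1 p.2)
  (countableP [set: nat * seq nat]))).
by move=> z [i0 [s [_ ->]]]; exists (i0, s).
Qed.

Lemma FS_first (x : nat -> S) : FS op x (x 0%N).
Proof. by exists 0%N, [::]. Qed.

Definition IP_partitionable (A : set S) : Prop :=
  exists P : set (set S),
    ~ countable P /\ is_partition_of P A /\ (forall B, P B -> IPset op B).

Lemma IPset_uncountable_of_partitionable :
  (forall A, ~ countable A -> IPset op A -> IP_partitionable A) ->
  forall A, ~ countable A -> IPset op A.
Proof.
move=> partA A Aunc; have [a Aa] := uncountable_set0 Aunc.
pose C := FS op (fun=> a).
have [||P [Punc [[Pdisj PA] PIP]]] := partA (A `|` C).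
- by move=> cAC; apply/Aunc/(subset_countable _ cAC) => z; left.
- by exists (fun=> a) => z Cz; right.
have [B PB BC0] := uncountable_disjoint_avoid Pdisj Punc (countable_FS (fun=> a)).
apply: (IPsetS _ (PIP B PB)) => z Bz.
have : (A `|` C) z by rewrite -PA; exists B.
by case=> // Cz; have : (B `&` C) z by []; rewrite BC0.
Qed.

Lemma partitionable_of_IPset_uncountable :
  (forall A, ~ countable A -> IPset op A) ->
  forall A, ~ countable A -> IPset op A -> IP_partitionable A.
Proof.
move=> IPunc A Aunc _.
have [M [MQ Mdisj Mmax]] :=
  maximal_disjoint_family (fun B => (exists x, B = FS op x) /\ B `<=` A).
have MA B : M B -> B `<=` A by move=> /MQ[].
have Munc : ~ countable M.
  move=> cM; pose U := \bigcup_(B in M) B.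
  have cU : countable U.
    by apply: bigcup_countable => // B /MQ[[x ->] _]; apply: countable_FS.
  have [x FSx] := IPunc _ (uncountable_setD Aunc cU).
  have MFSx : M (FS op x).
    apply: Mmax; first by split; [exists x | move=> z /FSx[]].
    by move=> C MC _; rewrite -subset0 => z [Cz /FSx[_]]; apply; exists C.
  by have [_] := FSx _ (FS_first x); apply; exists (FS op x); last exact: FS_first.
have [B0 MB0] := uncountable_set0 Munc.
have [[x0 B0E] _] := MQ _ MB0.
exists ([set B | M B /\ B <> B0] `|` [set B0 `|` (A `\` \bigcup_(B in M) B)]).
split; [|split].
- move=> cP; apply: (uncountable_setD Munc (countable1 B0)).
  by apply: subset_countable cP => B [MB nB]; left.
- exact: partition_absorb_rest.
- move=> B [[/MQ[[x ->] _] _]|->]; first by exists x.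
  by apply: (@IPsetS B0); [exact: subsetUl | rewrite B0E; exists x0].
Qed.

End IPsets.

Theorem theorem2p6 (S : Type) (op : S -> S -> S)
  (op_assoc : associative op)
  (S_uncountable : ~ countable [set: S])
  (no_idempotent : forall e : S, op e e <> e) :
  (forall A : set S, ~ countable A -> IPset op A ->
     exists P : set (set S),
       ~ countable P /\ is_partition_of P A /\ (forall B, P B -> IPset op B))
  <->
  (forall A : set S, ~ countable A -> IPset op A).
Proof.
split.
- exact: IPset_uncountable_of_partitionable.
- exact: partitionable_of_IPset_uncountable.
Qed.
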